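(* Let $n\ge1$, $0<p_{\mathrm{tot}}\le1$, and let $Y$ be a discrete random variable. Let $$\mathcal Z=\Big\{\max\big(\{Y\}\cup\{X_i\}_{i=1}^n\big)\ \Big|\ X_i\sim\mathrm{geom}(p_i),\ 0<p_i\le1,\ \prod_{i=1}^n p_i=p_{\mathrm{tot}}\Big\},$$ where $Y,X_1,\dots,X_n$ are mutually independent. Let $Z_{\mathrm{hom}}\in\mathcal Z$ be the member with $p_1=\dots=p_n$, i.e. $Z_{\mathrm{hom}}=\max(\{Y\}\cup\{X_{\mathrm{hom},i}\}_{i=1}^n)$ with $X_{\mathrm{hom},i}\sim\mathrm{geom}(\sqrt[n]{p_{\mathrm{tot}}})$. Then for every $Z\in\mathcal Z$, $Z\ge_{\mathrm{st}}Z_{\mathrm{hom}}$.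
   Context: $\mathrm{geom}(p)$ denotes the geometric distribution on $\{1,2,3,\dots\}$ with success probability $p$, so $\Pr(X\le k)=1-(1-p)^k$. For random variables $A,B$, $A\ge_{\mathrm{st}}B$ means $\Pr(A>z)\ge\Pr(B>z)$ for all real $z$. *)

From HB Require Import structures.
From mathcomp Require Import all_boot all_order all_algebra.
From mathcomp Require Import all_classical all_reals all_analysis.
Set Implicit Arguments. Unset Strict Implicit. Unset Printing Implicit Defensive.
Import Order.TTheory GRing.Theory Num.Theory.
Local Open Scope classical_set_scope.
Local Open Scope ring_scope.

Definition geom_distributed (R : realType) (d : measure_display)
  (T : measurableType d) (P : probability T R) (X : T -> R) (p : R) : Prop :=
  measurable_fun setT X /\
  forall k : nat, P (X @^-1` [set k.+1%:R]) = (p * (1 - p) ^+ k)%:E.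

Definition mutually_independent (R : realType) (d : measure_display)
  (T : measurableType d) (P : probability T R) (m : nat) (F : 'I_m -> T -> R) : Prop :=
  (forall i, measurable_fun setT (F i)) /\
  forall B : 'I_m -> set R, (forall i, measurable (B i)) ->
    P (\bigcap_i (F i @^-1` B i)) = (\prod_(i < m) P (F i @^-1` B i))%E.

(* The family (Y, X_1, ..., X_n) indexed by 'I_n.+1, Y at index 0. *)
Definition famYX (T R : Type) (n : nat) (Y : T -> R) (X : 'I_n -> T -> R)
  : 'I_n.+1 -> T -> R :=
  fun i => match unlift ord0 i with None => Y | Some j => X j end.

Definition discrete_rv (R : realType) (d : measure_display)
  (T : measurableType d) (P : probability T R) (Y : T -> R) : Prop :=
  measurable_fun setT Y /\
  exists S : set R, countable S /\ measurable S /\ P (Y @^-1` S) = 1%E.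

Definition maxYX (T : Type) (R : realType) (n : nat) (Y : T -> R) (X : 'I_n -> T -> R)
  : T -> R := fun w => \big[Num.max/Y w]_(i < n) X i w.

Definition st_ge (R : realType) (d1 d2 : measure_display)
  (T1 : measurableType d1) (T2 : measurableType d2)
  (P1 : probability T1 R) (P2 : probability T2 R) (A : T1 -> R) (B : T2 -> R) : Prop :=
  forall z : R, (P2 (B @^-1` [set x | (z < x)%R]) <= P1 (A @^-1` [set x | (z < x)%R]))%E.

From HB Require Import structures.
From mathcomp Require Import all_boot all_order all_algebra.
From mathcomp Require Import all_classical all_reals all_analysis.
From mathcomp Require Import ring lra.

(* With [F_k(p) = 1 - (1-p)^k] the geometric cdf at [k = floor z], independence gives
   [P(Z <= z) = P(Y <= z) * prod_i F_k(p_i)], so it suffices that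
   [prod_i F_k(p_i) <= F_k(q)^n] whenever [prod_i p_i = q^n].  The elasticity
   [x F_k'(x) / F_k(x) = k (1-x)^(k-1) / sum_(j<k) (1-x)^j] is nonincreasing, i.e.
   [t |-> ln F_k(e^t)] is concave; summing its tangent inequality at [ln q] over the
   [ln p_i], the linear terms cancel because [sum_i ln p_i = n ln q]. *)

Set Implicit Arguments.
Unset Strict Implicit.
Unset Printing Implicit Defensive.

Import Order.TTheory GRing.Theory Num.Theory.
Local Open Scope classical_set_scope.
Local Open Scope ring_scope.

Section GeomCdf.
Variable R : realType.

Definition geom_cdf (k : nat) (p : R) : R := 1 - (1 - p) ^+ k.

Definition geom_cdf_elast (k : nat) (x : R) : R :=
  x * (k%:R * (1 - x) ^+ k.-1) / geom_cdf k x.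

Lemma geom_cdfE k p : geom_cdf k p = p * \sum_(j < k) (1 - p) ^+ j.
Proof. by rewrite /geom_cdf -[1 - (1 - p) ^+ k]opprB subrX1; ring. Qed.

Lemma geom_cdf_gt0 k p : (0 < k)%N -> 0 < p -> p <= 1 -> 0 < geom_cdf k p.
Proof. by move=> k0 p0 p1; rewrite subr_gt0 exprn_ilt1 -?lt0n //; lra. Qed.

Lemma sum_expr_gt0 k (u : R) : (0 < k)%N -> 0 <= u -> 0 < \sum_(j < k) u ^+ j.
Proof.
case: k => // k _ u0; rewrite big_ord_recl expr0 ltr_wpDr //.
by apply: sumr_ge0 => i _; rewrite exprn_ge0.
Qed.

(* Termwise: [v^(k-1) u^j <= u^(k-1) v^j] since [u^(k-1-j) >= v^(k-1-j)]. *)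
Lemma sum_expr_cross_le k (u v : R) : 0 <= v -> v <= u ->
  v ^+ k.-1 * \sum_(j < k) u ^+ j <= u ^+ k.-1 * \sum_(j < k) v ^+ j.
Proof.
move=> v0 vu; rewrite !mulr_sumr; apply: ler_sum => -[j /= jk] _.
have u0 : 0 <= u by apply: le_trans vu.
rewrite -(subnK (_ : j <= k.-1)%N); last by case: k jk.
rewrite !exprD -!mulrA [X in _ <= _ * X]mulrC ler_wpM2r ?mulr_ge0 ?exprn_ge0 //.
by rewrite lerXn2r ?inE.
Qed.

Lemma geom_cdf_elastE k x : (0 < k)%N -> 0 < x -> x <= 1 ->
  geom_cdf_elast k x = k%:R * ((1 - x) ^+ k.-1 / \sum_(j < k) (1 - x) ^+ j).
Proof.
move=> k0 x0 x1; rewrite /geom_cdf_elast geom_cdfE.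
have S0 : 0 < \sum_(j < k) (1 - x) ^+ j by apply: sum_expr_gt0 => //; lra.
by field; rewrite !gt_eqF.
Qed.

Lemma geom_cdf_elast_nonincr k a b : (0 < k)%N -> 0 < a -> a <= b -> b <= 1 ->
  geom_cdf_elast k b <= geom_cdf_elast k a.
Proof.
move=> k0 a0 ab b1; have b0 : 0 < b by lra.
rewrite !geom_cdf_elastE ?(le_trans ab) // ler_wpM2l ?ler0n //.
rewrite ler_pdivrMr ?sum_expr_gt0 ?subr_ge0 // mulrAC.
by rewrite ler_pdivlMr ?sum_expr_gt0 ?subr_ge0 ?sum_expr_cross_le //; lra.
Qed.

Lemma is_derive_geom_cdf k (x : R) : is_derive x 1 (geom_cdf k) (k%:R * (1 - x) ^+ k.-1).
Proof.
have d1 : is_derive x (1:R) (cst (1:R) - id) (0 - 1) by apply: is_deriveB.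
have -> : geom_cdf k = cst 1 - (cst 1 - id) ^+ k.
  by apply/funext => y; rewrite /geom_cdf /= exprfctE.
apply: is_derive_eq (is_deriveB (is_derive_cst (1:R) x 1) (is_deriveX k d1)) _.
by rewrite /= !sub0r scalerN opprK [_ *: _]mulr1.
Qed.

Lemma ln_geom_cdf_tangent k (q p : R) : (0 < k)%N -> 0 < q -> q <= 1 -> 0 < p -> p <= 1 ->
  ln (geom_cdf k p) <= ln (geom_cdf k q) + geom_cdf_elast k q * (ln p - ln q).
Proof.
move=> k0 q0 q1 p0 p1; set c := geom_cdf_elast k q.
pose psi : R -> R := @ln R \o geom_cdf k - c \*: @ln R.
have psiE x : psi x = ln (geom_cdf k x) - c * ln x by [].
suff : psi p <= psi q by rewrite !psiE; lra.
have psi'E (x : R) : 0 < x -> x <= 1 -> is_derive x 1 psi ((geom_cdf_elast k x - c) / x).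
  move=> x0 x1; have f0 := geom_cdf_gt0 k0 x0 x1.
  apply: is_derive_eq
    (is_deriveB (is_derive1_comp (is_derive1_ln f0) (@is_derive_geom_cdf k x))
                (is_deriveZ c (is_derive1_ln x0))) _.
  by rewrite /geom_cdf_elast -[c *: _]/(c * _); field; rewrite !gt_eqF.
have psi_derivable (x : R) : 0 < x -> x <= 1 -> derivable psi x 1.
  by move=> x0 x1; have [] := psi'E x x0 x1.
have psi'_val (x : R) : 0 < x -> x <= 1 -> derive1 psi x = (geom_cdf_elast k x - c) / x.
  by move=> x0 x1; rewrite derive1E; have [_ ->] := psi'E x x0 x1.
have [pq|qp] := leP p q.
- apply: (@ger0_derive1_le_oc _ psi 0 q) => //; rewrite ?in_itv /= ?p0 ?q0 ?lexx //.
  + by move=> x; rewrite in_itv /= => /andP[x0 xq]; apply: psi_derivable; lra.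
  + move=> x; rewrite in_itv /= => /andP[x0 xq]; rewrite psi'_val; try lra.
    by rewrite divr_ge0 ?subr_ge0 ?geom_cdf_elast_nonincr //; lra.
  + apply: derivable_within_continuous => x; rewrite in_itv /= => /andP[x0 xq].
    by apply: psi_derivable; lra.
- apply: (@ler0_derive1_le_cc _ psi q 1) => //; rewrite ?in_itv /= ?lexx ?q1 ?p1 ?ltW //.
  + by move=> x; rewrite in_itv /= => /andP[qx x1]; apply: psi_derivable; lra.
  + move=> x; rewrite in_itv /= => /andP[qx x1]; rewrite psi'_val; try lra.
    by rewrite pmulr_lle0 ?invr_gt0 ?subr_le0 ?geom_cdf_elast_nonincr //; lra.
  + apply: derivable_within_continuous => x; rewrite in_itv /= => /andP[qx x1].
    by apply: psi_derivable; lra.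
Qed.

Lemma ln_prod n (f : 'I_n -> R) : (forall i, 0 < f i) ->
  ln (\prod_i f i) = \sum_i ln (f i).
Proof.
move=> f0; suff [] : 0 < \prod_i f i /\ ln (\prod_i f i) = \sum_i ln (f i) by [].
apply: (big_ind2 (fun a b => 0 < a /\ ln a = b)); first by rewrite ln1.
  by move=> a b a' b' [a0 <-] [a'0 <-]; rewrite mulr_gt0 // lnM.
by move=> i _; split.
Qed.

Lemma prod_geom_cdf_le n k (p : 'I_n -> R) (q : R) :
  (forall i, 0 < p i <= 1) -> 0 < q -> q <= 1 -> \prod_i p i = q ^+ n ->
  \prod_i geom_cdf k (p i) <= geom_cdf k q ^+ n.
Proof.
move=> hp q0 q1 prod_p.
have [->|k0] := posnP k.
  have cdf0 x : geom_cdf 0 x = 0 by rewrite /geom_cdf expr0 subrr.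
  by rewrite (eq_bigr (fun=> 0)) ?prodr_const ?card_ord ?cdf0.
have p0 i : 0 < p i by case/andP: (hp i).
have p1 i : p i <= 1 by case/andP: (hp i).
have f0 i : 0 < geom_cdf k (p i) by exact: geom_cdf_gt0.
have sum_ln_p : \sum_i ln (p i) = ln q *+ n by rewrite -ln_prod // prod_p lnXn.
rewrite -ler_ln ?posrE ?prodr_gt0 ?exprn_gt0 ?geom_cdf_gt0 // ln_prod // lnXn ?geom_cdf_gt0 //.
apply: le_trans (ler_sum _ (fun i _ => ln_geom_cdf_tangent k0 q0 q1 (p0 i) (p1 i))) _.
by rewrite big_split /= -mulr_sumr sumrB sum_ln_p !sumr_const card_ord subrr mulr0 addr0.
Qed.

End GeomCdf.

Lemma measurable_set_le (R : realType) (z : R) : measurable [set x : R | x <= z].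
Proof.
rewrite (_ : [set x : R | x <= z] = [set` `]-oo, z]%R]); first exact: measurable_itv.
by apply/seteqP; split => x; rewrite /= in_itv.
Qed.

Lemma measurable_funT_preimage d d' (T : measurableType d) (U : measurableType d')
    (f : T -> U) (B : set U) :
  measurable_fun setT f -> measurable B -> measurable (f @^-1` B).
Proof. by move=> mf mB; rewrite -[f @^-1` B]setTI; exact: mf. Qed.

Section GeometricLaw.
Context (R : realType) (d : measure_display) (T : measurableType d).
Variables (P : probability T R) (X : T -> R) (p : R).
Hypothesis X_geom : geom_distributed P X p.

Definition values_upto (k : nat) : set T :=
  [set w | exists2 j : nat, (j < k)%N & X w = j.+1%:R].

Lemma values_upto0 : values_upto 0 = set0.
Proof. by apply/seteqP; split => w // [j]. Qed.

Lemma values_uptoS k : values_upto k.+1 = values_upto k `|` X @^-1` [set k.+1%:R].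
Proof.
apply/seteqP; split => w /=.
  move=> [j]; rewrite ltnS leq_eqVlt => /predU1P[-> ->|jk Xw]; first by right.
  by left; exists j.
by case=> [[j jk Xw]|Xw]; [exists j => //; exact: ltnW | exists k].
Qed.

Lemma measurable_values_upto k : measurable (values_upto k).
Proof.
elim: k => [|k IH]; first by rewrite values_upto0.
rewrite values_uptoS; apply: measurableU => //.
exact: measurable_funT_preimage X_geom.1 (measurable_set1 _).
Qed.

Lemma prob_values_upto k : P (values_upto k) = (geom_cdf k p)%:E.
Proof.
elim: k => [|k IH]; first by rewrite values_upto0 measure0 /geom_cdf expr0 subrr.
rewrite values_uptoS measureU; last 3 first.
- exact: measurable_values_upto.
- exact: measurable_funT_preimage X_geom.1 (measurable_set1 _).
- apply/seteqP; split => w // [[j jk Xw]]; rewrite /= Xw => /eqP.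
  by rewrite eqr_nat eqSS => /eqP jE; rewrite jE ltnn in jk.
rewrite -[LHS]/(P (values_upto k) + P (X @^-1` [set k.+1%:R]))%E IH X_geom.2.
by rewrite -EFinD /geom_cdf exprS; congr (_%:E); ring.
Qed.

Lemma values_upto_truncn_sub (z : R) :
  values_upto (Num.truncn z) `<=` X @^-1` [set x : R | x <= z].
Proof. by move=> w [j] + /= Xw; rewrite truncn_gt_nat Xw. Qed.

Lemma preimage_le_sub_values_upto (z : R) m :
  X @^-1` [set x : R | x <= z] `<=` values_upto (Num.truncn z) `|` ~` values_upto m.
Proof.
move=> w /= Xz; have [[j _ Xw]|] := pselect (values_upto m w); last by right.
by left; exists j; rewrite // truncn_gt_nat -Xw.
Qed.

Lemma geom_distributed_cdf (z : R) : 0 < p -> p <= 1 ->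
  P (X @^-1` [set x : R | x <= z]) = (geom_cdf (Num.truncn z) p)%:E.
Proof.
move=> p0 p1; set k := Num.truncn z; set A := X @^-1` _.
have mA : measurable A := measurable_funT_preimage X_geom.1 (measurable_set_le z).
apply/le_anti/andP; split; last first.
  rewrite -prob_values_upto; apply: le_measure; rewrite ?inE //.
  - exact: measurable_values_upto.
  - exact: values_upto_truncn_sub.
rewrite -(fineK (fin_num_measure P _ mA)) lee_fin; apply/ler_addgt0Pr => e e0.
have [N _ /(_ N (leqnn N)) /= small] : \forall N \near \oo, (1 - p) ^+ N < e.
  by apply: (cvgr_lt 0) e0; apply: cvg_expr; rewrite ger0_norm; lra.
have : (P A <= (geom_cdf k p + (1 - p) ^+ N)%:E)%E.
  have mV := measurable_values_upto.
  rewrite EFinD -prob_values_upto (_ : ((1 - p) ^+ N)%:E = P (~` values_upto N)).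
    apply: le_trans (measureU2 P (mV _) (measurableC (mV _))).
    apply: le_measure; rewrite ?inE //; first exact: measurableU (mV _) (measurableC (mV _)).
    exact: preimage_le_sub_values_upto.
  by rewrite probability_setC // prob_values_upto /geom_cdf -EFinB subKr.
rewrite -(fineK (fin_num_measure P _ mA)) lee_fin => le_cdf.
by apply: le_trans le_cdf _; rewrite lerD2l ltW.
Qed.

End GeometricLaw.

Section MaxOfIndependent.
Context (R : realType) (d : measure_display) (T : measurableType d).
Variables (P : probability T R) (n : nat) (Y : T -> R) (X : 'I_n -> T -> R).

Lemma famYX0 : famYX Y X ord0 = Y.
Proof. by rewrite /famYX unlift_none. Qed.

Lemma famYX_lift i : famYX Y X (lift ord0 i) = X i.
Proof. by rewrite /famYX liftK. Qed.

Lemma maxYX_le_bigcap (z : R) :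
  maxYX Y X @^-1` [set x : R | x <= z] = \bigcap_i (famYX Y X i @^-1` [set x : R | x <= z]).
Proof.
apply/seteqP; split => w /=.
  move=> /bigmax_leP[Yz Xz] i _.
  by case: (unliftP ord0 i) => [j ->|->]; rewrite /= ?famYX_lift ?famYX0 ?Xz.
move=> famz; apply/bigmax_leP; split; first by have := famz ord0 I; rewrite famYX0.
by move=> i _; have := famz (lift ord0 i) I; rewrite famYX_lift.
Qed.

Lemma prob_maxYX_gt (z : R) : mutually_independent P (famYX Y X) ->
  P (maxYX Y X @^-1` [set x | z < x]) =
  (1 - P (Y @^-1` [set x : R | (x <= z)%R]) *
       \prod_i P (X i @^-1` [set x : R | (x <= z)%R]))%E.
Proof.
move=> [mF indep]; set L := [set x : R | x <= z].
have mL := measurable_set_le z.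
have -> : maxYX Y X @^-1` [set x | z < x] = ~` (maxYX Y X @^-1` L).
  by apply/seteqP; split => w /=; rewrite ltNge => /negP.
rewrite probability_setC maxYX_le_bigcap; last first.
  apply: fin_bigcap_measurable => [|i _]; first exact: finite_finset.
  exact: measurable_funT_preimage (mF i) mL.
by rewrite (indep (fun=> L)) // big_ord_recl famYX0; under eq_bigr do rewrite famYX_lift.
Qed.

End MaxOfIndependent.

Theorem mainTheorem4 (R : realType) (n : nat) (ptot : R)
  (d1 : measure_display) (T1 : measurableType d1) (P1 : probability T1 R)
  (d2 : measure_display) (T2 : measurableType d2) (P2 : probability T2 R)
  (Y1 : T1 -> R) (Y2 : T2 -> R)
  (p : 'I_n -> R) (X : 'I_n -> T1 -> R) (Xhom : 'I_n -> T2 -> R) :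
  (0 < n)%N -> 0 < ptot -> ptot <= 1 ->
  discrete_rv P1 Y1 ->
  (* Y1 and Y2 have the same distribution (the same Y) *)
  measurable_fun setT Y2 ->
  (forall B : set R, measurable B -> P1 (Y1 @^-1` B) = P2 (Y2 @^-1` B)) ->
  (forall i, 0 < p i <= 1) -> \prod_(i < n) p i = ptot ->
  (forall i, geom_distributed P1 (X i) (p i)) ->
  mutually_independent P1 (famYX Y1 X) ->
  (forall i, geom_distributed P2 (Xhom i) (ptot `^ (n%:R)^-1)) ->
  mutually_independent P2 (famYX Y2 Xhom) ->
  st_ge P1 P2 (maxYX Y1 X) (maxYX Y2 Xhom).
Proof.
move=> n_gt0 ptot_gt0 ptot_le1 _ _ Y_law p_bnd prod_p X_geom indep Xhom_geom indep_hom z.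
set q := ptot `^ n%:R^-1.
have q_gt0 : 0 < q by exact: powR_gt0.
have qn : q ^+ n = ptot.
  by rewrite -powR_mulrn ?ltW // -powRrM mulVf ?powRr1 ?ltW // pnatr_eq0 -lt0n.
have q_le1 : q <= 1.
  by rewrite -(ler_pXn2r n_gt0) ?nnegrE ?qn ?expr1n // ltW.
set k := Num.truncn z.
rewrite /st_ge (prob_maxYX_gt _ indep) (prob_maxYX_gt _ indep_hom).
set L := [set x : R | (x <= z)%R].
have cdf_X : (\prod_i P1 (X i @^-1` L) = (\prod_i geom_cdf k (p i))%:E)%E.
  rewrite -prodEFin; apply: eq_bigr => i _; case/andP: (p_bnd i) => ? ?.
  exact: geom_distributed_cdf.
have cdf_Xhom : (\prod_i P2 (Xhom i @^-1` L) = (geom_cdf k q ^+ n)%:E)%E.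
  rewrite -[in RHS](card_ord n) -prodr_const -prodEFin; apply: eq_bigr => i _.
  exact: geom_distributed_cdf.
rewrite cdf_X cdf_Xhom -(Y_law _ (measurable_set_le z)).
apply: leeB => //; apply: lee_wpmul2l; first exact: measure_ge0.
by rewrite lee_fin prod_geom_cdf_le // prod_p.
Qed.
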